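(* Let $d=d_1+\dots+d_l$, ${\bf L}=\mathrm{Diag}({\bf L}_1,\dots,{\bf L}_l)$ with ${\bf L}_i\in\mathbb{S}^{d_i}_{++}$, and $q_1,\dots,q_l\in(0,1]$. Let ${\bf T}=\mathrm{Diag}({\bf T}_1,\dots,{\bf T}_l)$ with ${\bf T}_i=\frac{\eta_i}{q_i}{\bf I}_{d_i}$, $\eta_i\sim\mathrm{Bernoulli}(q_i)$. Let ${\bf D}:=(\mathbb{E}[{\bf T}{\bf L}{\bf T}])^{-1}$ (the optimal stepsize for det-CGD2), and for a constant $C_0>0$ (standing for $2(f(x^0)-f^{\inf})/\varepsilon^2$) define the communication complexity $\mathcal{C}(q):=\big(\sum_{i=1}^lq_id_i\big)\cdot\frac{C_0}{\det({\bf D})^{1/d}}$. Then $$\mathcal C(q)=C_0\Big(\sum_{i=1}^lq_id_i\Big)\prod_{i=1}^l\Big(\frac1{q_i}\Big)^{d_i/d}\det({\bf L})^{1/d}.$$ Moreover, $\mathcal C$ is minimized over $q\in(0,1]^l$ when all $q_i$ are equal, and the minimum value is $C_0\, d\,\det({\bf L})^{1/d}$.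
   Context: $\mathrm{Diag}(\cdot)$ denotes a block-diagonal matrix; $\mathbb{S}^{m}_{++}$: symmetric positive definite $m\times m$ matrices. Motivation: for det-CGD2, $x^{k+1}=x^k-{\bf T}^k{\bf D}\nabla f(x^k)$ with i.i.d. unbiased sketches ${\bf T}^k$, reaching $\frac1K\sum_k\mathbb{E}\|\nabla f(x^k)\|^2_{{\bf D}/\det({\bf D})^{1/d}}\le\varepsilon^2$ takes $K\ge 2(f(x^0)-f^{\inf})/(\varepsilon^2\det({\bf D})^{1/d})$ iterations, each sending $\sum_iq_id_i$ coordinates in expectation; $\mathcal C(q)$ is the product. *)

From HB Require Import structures.
From mathcomp Require Import all_boot all_order all_algebra.
From mathcomp Require Import all_classical all_reals.
From mathcomp Require Import exp.
Set Implicit Arguments. Unset Strict Implicit. Unset Printing Implicit Defensive.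
Import Order.TTheory GRing.Theory Num.Theory.
Local Open Scope ring_scope.

Section Defs.
Variable R : realType.

Definition posdef (m : nat) (A : 'M[R]_m) : Prop :=
  A^T = A /\ forall v : 'rV[R]_m, v != 0 -> 0 < (v *m A *m v^T) 0 0.

Variable l : nat.
Variable d : 'I_l -> nat.

Definition dim_tot : nat := (\sum_(i < l) d i)%N.

(* Expectation w.r.t. independent eta_i ~ Bernoulli(q_i), i < l:
   a realization of (eta_1,...,eta_l) is eta : {ffun 'I_l -> bool},
   with probability prod_i (q_i if eta_i else 1 - q_i). *)
Definition bern_weight (q : 'I_l -> R) (eta : {ffun 'I_l -> bool}) : R :=
  \prod_(i < l) (if eta i then q i else 1 - q i).

Definition Ebern (q : 'I_l -> R) (m n : nat)
  (X : {ffun 'I_l -> bool} -> 'M[R]_(m, n)) : 'M[R]_(m, n) :=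
  \sum_(eta : {ffun 'I_l -> bool}) bern_weight q eta *: X eta.

Definition Lmat (L : forall i : 'I_l, 'M[R]_(d i)) : 'M[R]_dim_tot :=
  \mxdiag_(i < l) L i.

Definition Tmat (q : 'I_l -> R) (eta : {ffun 'I_l -> bool}) : 'M[R]_dim_tot :=
  \mxdiag_(i < l) (((eta i)%:R / q i) *: (1%:M : 'M[R]_(d i))).

Definition Dmat (L : forall i : 'I_l, 'M[R]_(d i)) (q : 'I_l -> R) : 'M[R]_dim_tot :=
  invmx (Ebern q (fun eta => Tmat q eta *m Lmat L *m Tmat q eta)).

Definition commC (C0 : R) (L : forall i : 'I_l, 'M[R]_(d i)) (q : 'I_l -> R) : R :=
  (\sum_(i < l) q i * (d i)%:R) * (C0 / ((\det (Dmat L q)) `^ (dim_tot%:R^-1))).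

End Defs.

From HB Require Import structures.
From mathcomp Require Import all_boot all_order all_algebra.
From mathcomp Require Import all_classical all_reals.
From mathcomp Require Import exp.
From mathcomp Require Import polyrcf sequences.
From mathcomp.algebra_tactics Require Import ring.
Import Order.TTheory GRing.Theory Num.Theory.
Local Open Scope ring_scope.

(* Since [eta_i ^ 2 = eta_i], [E[T L T]] is block diagonal with blocks
   [L_i / q_i], so [det(D)^(-1/d) = prod_i (1/q_i)^(d_i/d) det(L)^(1/d)], which is
   the closed form.  The factor [(sum_i q_i d_i) prod_i (1/q_i)^(d_i/d)] equals
   [d] when all [q_i] are equal, and is at least [d] by the weighted AM-GM
   inequality [prod_i q_i^(d_i/d) <= sum_i (d_i/d) q_i]. *)

Lemma mul_mxdiag (R : pzSemiRingType) p (p_ : 'I_p -> nat)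
    (A B : forall i, 'M[R]_(p_ i)) :
  \mxdiag_i A i *m \mxdiag_i B i = \mxdiag_i (A i *m B i).
Proof.
rewrite {2}/mxdiag mul_mxdiag_mxblock /mxdiag; apply/eq_mxblock => i j.
by case: eqVneq => [->|]; rewrite ?conform_mx_id ?mulmx0.
Qed.

Lemma scale_mxdiag (R : pzSemiRingType) p (p_ : 'I_p -> nat) (a : R)
    (B : forall i, 'M[R]_(p_ i)) :
  a *: \mxdiag_i B i = \mxdiag_i (a *: B i).
Proof.
rewrite -mul_scalar_mx -(mxdiagZ (p_ := p_)) mul_mxdiag.
by apply: eq_mxdiag => i; rewrite mul_scalar_mx.
Qed.

Lemma det_castmx (R : comPzRingType) m n (e : m = n) (A : 'M[R]_m) :
  \det (castmx (e, e) A) = \det A.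
Proof. by case: n / e; rewrite castmx_id. Qed.

Lemma det_mxdiag (R : comPzRingType) p (p_ : 'I_p -> nat)
    (B : forall i, 'M[R]_(p_ i)) :
  \det (\mxdiag_i B i) = \prod_i \det (B i).
Proof.
elim: p p_ B => [|p IHp] p_ B; last first.
  by rewrite mxdiag_recl det_castmx det_ublock IHp big_ord_recl.
have sum0 : (\sum_i p_ i = 0)%N by rewrite big_ord0.
rewrite [RHS]big_ord0; move: (\mxdiag_i B i); rewrite sum0 => A.
exact: det_mx00.
Qed.

Lemma horner_char_polyN (R : comNzRingType) n (A : 'M[R]_n) (s : R) :
  (char_poly (- A)).[s] = \det (A + s%:M).
Proof.
rewrite -horner_evalE -det_map_mx; congr (\det _).
apply/matrixP => i j; rewrite !mxE /=.
by rewrite horner_evalE hornerD hornerN hornerMn hornerX hornerC opprK addrC.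
Qed.

Section PositiveDefinite.
Variables (R : realType) (n : nat) (A : 'M[R]_n).
Hypothesis A_posdef : posdef A.

Lemma det_posdef_add_scalar_neq0 (s : R) : 0 <= s -> \det (A + s%:M) != 0.
Proof.
move=> s_ge0; apply/negP => /det0P [v v_neq0 vA0].
have vv_ge0 : 0 <= (v *m v^T) 0 0.
  by rewrite mxE; apply: sumr_ge0 => j _; rewrite mxE -expr2 sqr_ge0.
have : (v *m (A + s%:M) *m v^T) 0 0 = 0 by rewrite vA0 mul0mx mxE.
rewrite mulmxDr mul_mx_scalar mulmxDl -scalemxAl mxE [X in _ + X]mxE.
by apply/eqP; rewrite gt_eqF // ltr_wpDr ?mulr_ge0 // A_posdef.2.
Qed.

(* The monic polynomial [char_poly (- A)] has no root on [0, +oo), so it is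
   positive there; its value at [0] is [\det A]. *)
Lemma posdef_det_gt0 : 0 < \det A.
Proof.
have noroot x : x \in `[0, +oo[ -> ~~ root (char_poly (- A)) x.
  by rewrite in_itv andbT /root horner_char_polyN => /det_posdef_add_scalar_neq0.
have := sgp_pinftyP noroot (_ : 0 \in `[0, +oo[).
rewrite /sgp_pinfty (monicP (char_poly_monic _)) sgr1.
rewrite horner_char_polyN raddf0 addr0 -sgr_cp0 => -> //.
by rewrite in_itv /= lexx.
Qed.

End PositiveDefinite.

Section PowR.
Variable R : realType.
Implicit Types (x r : R).

Lemma powRV x r : 0 < x -> x^-1 `^ r = (x `^ r)^-1.
Proof.
move=> x_gt0; rewrite /powR invr_eq0 gt_eqF // lnV ?posrE //.
by rewrite mulrN expRN.
Qed.

Lemma powR_prod (I : finType) (x : I -> R) r : (forall i, 0 <= x i) ->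
  (\prod_i x i) `^ r = \prod_i x i `^ r.
Proof.
move=> x_ge0.
pose K y z := 0 <= y /\ y `^ r = z.
suff [] : K (\prod_i x i) (\prod_i x i `^ r) by [].
apply: big_rec2 => [|i y z _ [y_ge0 <-]]; first by rewrite /K powR1.
by split; [rewrite mulr_ge0 | rewrite powRM].
Qed.

Lemma powR_sum (I : finType) x (r : I -> R) : 0 < x ->
  x `^ (\sum_i r i) = \prod_i x `^ r i.
Proof. by move=> x_gt0; rewrite /powR gt_eqF // mulr_suml expR_sum. Qed.

(* Sum [ln y <= y - 1] at [y = x i / A], [A] the weighted arithmetic mean. *)
Lemma weighted_amgm (I : finType) (w x : I -> R) :
  (forall i, 0 <= w i) -> \sum_i w i = 1 -> (forall i, 0 < x i) ->
  \prod_i x i `^ w i <= \sum_i w i * x i.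
Proof.
move=> w_ge0 w_sum1 x_gt0; set A := \sum_i w i * x i.
have wx_ge0 i : 0 <= w i * x i by rewrite mulr_ge0 // ltW.
have A_gt0 : 0 < A.
  rewrite lt_def sumr_ge0 ?andbT //; apply: contra_neq (oner_neq0 R).
  move=> A0; have wx0 := psumr_eq0P (fun i _ => wx_ge0 i) A0.
  rewrite -w_sum1 big1 // => i _.
  by move/eqP: (wx0 i isT); rewrite mulf_eq0 (gt_eqF (x_gt0 i)) orbF => /eqP.
have ln_le i : w i * ln (x i / A) <= w i * (x i / A - 1).
  rewrite ler_wpM2l // lerBrDl.
  by have := expR_ge1Dx (ln (x i / A)); rewrite lnK // posrE divr_gt0.
have sum_lnA : \sum_i w i * ln (x i / A) = \sum_i w i * ln (x i) - ln A.
  rewrite -[ln A]mul1r -w_sum1 mulr_suml -sumrB; apply: eq_bigr => i _.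
  by rewrite ln_div ?posrE // mulrBr.
have -> : \prod_i x i `^ w i = expR (\sum_i w i * ln (x i)).
  by rewrite expR_sum; apply: eq_bigr => i _; rewrite /powR gt_eqF.
rewrite -[A in _ <= A]lnK ?posrE // ler_expR -subr_le0 -sum_lnA.
apply: le_trans (ler_sum _ (fun i _ => ln_le i)) _.
rewrite (eq_bigr (fun i => w i * x i / A - w i)) => [|i _]; last first.
  by rewrite mulrBr mulr1 mulrA.
by rewrite sumrB -mulr_suml w_sum1 divff ?gt_eqF ?subrr.
Qed.

End PowR.

Lemma bern_mean (R : realType) l (q : 'I_l -> R) (i : 'I_l) :
  \sum_(eta : {ffun 'I_l -> bool}) bern_weight q eta * (eta i)%:R = q i.
Proof.
pose F j (b : bool) :=
  (if b then q j else 1 - q j) * (if j == i then b%:R else 1).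
have sum_F j : \sum_b F j b = if j == i then q j else 1.
  by rewrite big_bool /F; case: eqP => _; rewrite /= ?mulr1 ?mulr0 ?addr0 ?subrKC.
transitivity (\prod_j \sum_b F j b); last first.
  by rewrite (eq_bigr _ (fun j _ => sum_F j)) -big_mkcond big_pred1_eq.
rewrite bigA_distr_bigA; apply: eq_bigr => eta _.
by rewrite big_split /= -big_mkcond big_pred1_eq.
Qed.

Section OptimalStepsize.
Variables (R : realType) (l : nat) (d : 'I_l -> nat).
Variable L : forall i : 'I_l, 'M[R]_(d i).

Lemma Ebern_TLT (q : 'I_l -> R) : (forall i, q i != 0) ->
  Ebern q (fun eta => Tmat d q eta *m Lmat L *m Tmat d q eta)
  = \mxdiag_i ((q i)^-1 *: L i).
Proof.
move=> q_neq0; rewrite /Ebern.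
under eq_bigr => eta _ do rewrite /Tmat /Lmat !mul_mxdiag scale_mxdiag.
rewrite -mxdiag_sum; apply: eq_mxdiag => i.
under eq_bigr => eta _ do rewrite scalemx1 mul_scalar_mx mul_mx_scalar !scalerA.
rewrite -scaler_suml; congr (_ *: _).
(* [eta i] is a bit, so [((eta i) / q i) ^+ 2 = (eta i) / (q i) ^+ 2]. *)
transitivity (\sum_eta bern_weight q eta * (eta i)%:R / q i ^+ 2).
  apply: eq_bigr => eta _; case: (eta i); last by rewrite !(mul0r, mulr0).
  by rewrite !mul1r mulr1 -mulrA -invfM.
by rewrite -mulr_suml bern_mean expr2 invfM mulrA divff ?mul1r.
Qed.

Lemma det_Dmat (q : 'I_l -> R) : (forall i, q i != 0) ->
  \det (Dmat L q) = (\prod_i ((q i)^-1 ^+ d i * \det (L i)))^-1.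
Proof.
move=> q_neq0; rewrite /Dmat Ebern_TLT // det_inv det_mxdiag.
by under eq_bigr => i _ do rewrite detZ.
Qed.

End OptimalStepsize.

Section CommunicationComplexity.
Variables (R : realType) (l : nat) (d : 'I_l -> nat).
Variable L : forall i : 'I_l, 'M[R]_(d i).
Hypothesis L_posdef : forall i, posdef (L i).

Local Notation dim := ((dim_tot d)%:R : R).

Let detL_gt0 i : 0 < \det (L i) := @posdef_det_gt0 R _ _ (L_posdef i).

Lemma commC_closed_form C0 (q : 'I_l -> R) : (forall i, 0 < q i) ->
  commC C0 L q = C0 * (\sum_i q i * (d i)%:R)
    * \prod_i (q i)^-1 `^ ((d i)%:R / dim) * \det (Lmat L) `^ dim^-1.
Proof.
move=> q_gt0; rewrite /commC det_Dmat => [|i]; last by rewrite gt_eqF.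
have qV_ge0 i : 0 <= (q i)^-1 by rewrite invr_ge0 ltW.
have factor_gt0 i : 0 < (q i)^-1 ^+ d i * \det (L i).
  by rewrite mulr_gt0 ?exprn_gt0 ?invr_gt0.
rewrite powRV ?prodr_gt0 // invrK powR_prod => [|i]; last exact/ltW.
rewrite /Lmat det_mxdiag powR_prod => [|i]; last exact/ltW.
have factor_powR i : ((q i)^-1 ^+ d i * \det (L i)) `^ dim^-1
    = (q i)^-1 `^ ((d i)%:R / dim) * \det (L i) `^ dim^-1.
  rewrite powRM ?exprn_ge0 ?qV_ge0 ?(ltW (detL_gt0 i)) //.
  by rewrite -powR_mulrn // -powRrM.
rewrite (eq_bigr _ (fun i _ => factor_powR i)) big_split /=; ring.
Qed.

Hypothesis dim_gt0 : (0 < dim_tot d)%N.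

Lemma sum_dim_weights : \sum_i (d i)%:R / dim = 1.
Proof. by rewrite -mulr_suml -natr_sum divff // pnatr_eq0 -lt0n. Qed.

Lemma dim_le_weighted_cost (q : 'I_l -> R) : (forall i, 0 < q i) ->
  dim <= (\sum_i q i * (d i)%:R) * \prod_i (q i)^-1 `^ ((d i)%:R / dim).
Proof.
move=> q_gt0; under eq_bigr => i _ do rewrite powRV //.
have gm_gt0 : 0 < \prod_i q i `^ ((d i)%:R / dim).
  by apply: prodr_gt0 => i _; rewrite powR_gt0.
rewrite prodfV ler_pdivlMr // mulrC -ler_pdivlMr ?ltr0n //.
have mean_q : \sum_i (d i)%:R / dim * q i = (\sum_i q i * (d i)%:R) / dim.
  by rewrite mulr_suml; apply: eq_bigr => i _; rewrite mulrC mulrA.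
rewrite -mean_q; apply: weighted_amgm sum_dim_weights q_gt0 => i.
by rewrite divr_ge0.
Qed.

Lemma commC_uniform C0 (c : R) : 0 < c ->
  commC C0 L (fun _ => c) = C0 * dim * \det (Lmat L) `^ dim^-1.
Proof.
move=> c_gt0; rewrite commC_closed_form // -mulr_sumr -natr_sum.
rewrite -powR_sum ?invr_gt0 // sum_dim_weights powRr1 ?invr_ge0 ?ltW //.
by congr (_ * _); field; rewrite gt_eqF.
Qed.

End CommunicationComplexity.

Theorem corollary2 (R : realType) (l : nat) (d : 'I_l -> nat)
  (L : forall i : 'I_l, 'M[R]_(d i)) (C0 : R) :
  (0 < l)%N ->
  (forall i, 0 < d i)%N ->
  (forall i, posdef (L i)) ->
  0 < C0 ->
  (forall q : 'I_l -> R, (forall i, 0 < q i <= 1) ->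
     commC C0 L q =
       C0 * (\sum_(i < l) q i * (d i)%:R)
          * (\prod_(i < l) ((q i)^-1) `^ ((d i)%:R / (dim_tot d)%:R))
          * (\det (Lmat L)) `^ ((dim_tot d)%:R^-1))
  /\ (forall c : R, 0 < c <= 1 ->
        forall q' : 'I_l -> R, (forall i, 0 < q' i <= 1) ->
          commC C0 L (fun _ => c) <= commC C0 L q')
  /\ (forall c : R, 0 < c <= 1 ->
        commC C0 L (fun _ => c) = C0 * (dim_tot d)%:R * (\det (Lmat L)) `^ ((dim_tot d)%:R^-1)).
Proof.
move=> l_gt0 d_gt0 L_posdef C0_gt0.
have dim_gt0 : (0 < dim_tot d)%N.
  by rewrite /dim_tot (bigD1 (Ordinal l_gt0)) //= addn_gt0 d_gt0.
have q_pos (q : 'I_l -> R) : (forall i, 0 < q i <= 1) -> forall i, 0 < q i.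
  by move=> q01 i; case/andP: (q01 i).
split; [|split].
- by move=> q /q_pos; exact: commC_closed_form.
- move=> c /andP[c_gt0 _] q /q_pos q_gt0.
  rewrite commC_uniform // commC_closed_form // -!mulrA ler_wpM2l ?(ltW C0_gt0) //.
  by rewrite !mulrA ler_wpM2r ?powR_ge0 // dim_le_weighted_cost.
- by move=> c /andP[c_gt0 _]; exact: commC_uniform.
Qed.
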